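(* Let $\mathcal{A}$ be a Desargues affine plane, let $O\neq I$ be points, and let $\varphi$ be a translation of $\mathcal{A}$. Equip $\ell^{OI}$ with the skew field structure with zero $O$ and unit $I$, and the line $\varphi(\ell^{OI})$ with the skew field structure with zero $\varphi(O)$ and unit $\varphi(I)$. Then for all $A,B,C\in\ell^{OI}$ with $B\neq C$, \[ \varphi(r(A,B;C))=r(\varphi(A),\varphi(B);\varphi(C)), \] where the ratio on the left is computed in $\ell^{OI}$ and the ratio on the right in $\varphi(\ell^{OI})$.
   Context: A Desargues affine plane is an incidence structure of points and lines in which any two distinct points lie on exactly one line, through a point not on a line $\ell$ there is exactly one line disjoint from $\ell$ (Playfair), there exist three non-collinear points, and Desargues' axiom holds: if $A,B,C,A',B',C'$ are points such that the pairwise distinct lines $AA',BB',CC'$ are either all parallel or all pass through one point, and $AB\parallel A'B'$, $BC\parallel B'C'$ (with $AB\neq A'B'$, $BC\neq B'C'$, $A\ne C$, $A'\ne C'$), then $AC\parallel A'C'$. Skew field on a line: for distinct points $O,I$ and points $A,B$ on the line $\ell^{OI}$, addition is defined by: choose a point $B_1\notin\ell^{OI}$; let $P_1$ be the intersection of the line through $B_1$ parallel to $\ell^{OI}$ with the line through $A$ parallel to $OB_1$; then $A+B$ is the intersection of $\ell^{OI}$ with the line through $P_1$ parallel to $BB_1$. Multiplication is defined by: choose $B_1\notin\ell^{OI}$; let $P_1$ be the intersection of the line through $A$ parallel to $IB_1$ with the line $OB_1$; then $A\cdot B$ is the intersection of $\ell^{OI}$ with the line through $P_1$ parallel to $BB_1$.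 These operations do not depend on the choice of $B_1$ and make $(\ell^{OI},+,\cdot)$ a skew field with zero $O$ and unit $I$; the same construction applies to any line with any chosen pair of distinct points as zero and unit. $-X$ and $X^{-1}$ denote additive and multiplicative inverses, $X-Y=X+(-Y)$. Ratio of three points on such a line: $r(A,B;C)=(B-C)^{-1}(A-C)$ for $B\neq C$. A dilatation of $\mathcal{A}$ is a collineation $\delta$ such that $\delta(P)\delta(Q)\parallel PQ$ for all points $P\neq Q$. A translation is either the identity or a dilatation with no fixed point. *)

From Stdlib Require Import ClassicalEpsilon.

Set Implicit Arguments.

Section AffinePlane.
Variables (point line : Type) (inc : point -> line -> Prop).

Definition is_lt (P Q : point) (l : line) : Prop := P <> Q /\ inc P l /\ inc Q l.

Definition par (l m : line) : Prop := l = m \/ (forall X, ~ (inc X l /\ inc X m)).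

Definition collinear (A B C : point) : Prop :=
  exists l, inc A l /\ inc B l /\ inc C l.

Definition desargues_axiom : Prop :=
  forall (A B C A' B' C' : point) (a b c p p' q q' s s' : line),
    is_lt A A' a -> is_lt B B' b -> is_lt C C' c ->
    a <> b -> b <> c -> a <> c ->
    ((par a b /\ par b c /\ par a c) \/
       (exists Z, inc Z a /\ inc Z b /\ inc Z c)) ->
    is_lt A B p -> is_lt A' B' p' -> par p p' -> p <> p' ->
    is_lt B C q -> is_lt B' C' q' -> par q q' -> q <> q' ->
    A <> C -> A' <> C' ->
    is_lt A C s -> is_lt A' C' s' -> par s s'.

Definition desargues_affine_plane : Prop :=
  (forall P Q, P <> Q -> exists! l, inc P l /\ inc Q l) /\
  (forall P l, ~ inc P l ->
     exists! m, inc P m /\ (forall X, ~ (inc X l /\ inc X m))) /\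
  (exists A B C : point, ~ collinear A B C) /\
  desargues_axiom.

Definition image_is (f : point -> point) (l m : line) : Prop :=
  forall X, inc X m <-> exists P, inc P l /\ f P = X.

Definition collineation (f : point -> point) : Prop :=
  (forall P Q, f P = f Q -> P = Q) /\ (forall X, exists P, f P = X) /\
  (forall l, exists m, image_is f l m) /\
  (forall m, exists l, image_is f l m).

Definition dilatation (f : point -> point) : Prop :=
  collineation f /\
  forall P Q l m, is_lt P Q l -> is_lt (f P) (f Q) m -> par l m.

Definition translation (f : point -> point) : Prop :=
  (forall P, f P = P) \/ (dilatation f /\ forall P, f P <> P).

Definition choose_pt (d : point) (Pr : point -> Prop) : point :=
  epsilon (inhabits d) Pr.

Definition on_OI (O I X : point) : Prop :=
  exists l, is_lt O I l /\ inc X l.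

Definition aux_pt (O I : point) : point :=
  choose_pt O (fun X => forall l, is_lt O I l -> ~ inc X l).

Definition add_OI (O I A B : point) : point :=
  let B1 := aux_pt O I in
  choose_pt O (fun S => exists (l m1 k m2 j n : line) (P1 : point),
    is_lt O I l /\
    inc B1 m1 /\ par m1 l /\
    is_lt O B1 k /\ inc A m2 /\ par m2 k /\
    inc P1 m1 /\ inc P1 m2 /\
    is_lt B B1 j /\ inc P1 n /\ par n j /\
    inc S n /\ inc S l).

Definition mul_OI (O I A B : point) : point :=
  let B1 := aux_pt O I in
  choose_pt O (fun S => exists (l h m2 k j n : line) (P1 : point),
    is_lt O I l /\
    is_lt I B1 h /\ inc A m2 /\ par m2 h /\
    is_lt O B1 k /\
    inc P1 m2 /\ inc P1 k /\
    is_lt B B1 j /\ inc P1 n /\ par n j /\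
    inc S n /\ inc S l).

Definition opp_OI (O I X : point) : point :=
  choose_pt O (fun Y => on_OI O I Y /\ add_OI O I X Y = O).

Definition inv_OI (O I X : point) : point :=
  choose_pt O (fun Y => on_OI O I Y /\ mul_OI O I X Y = I).

Definition sub_OI (O I X Y : point) : point := add_OI O I X (opp_OI O I Y).

Definition ratio_OI (O I A B C : point) : point :=
  mul_OI O I (inv_OI O I (sub_OI O I B C)) (sub_OI O I A C).

End AffinePlane.

From Pilot Require Import Defs.
From Stdlib Require Import ClassicalEpsilon.

(* Each skew field operation on the line OI is a construction by parallel
   projections from an auxiliary point b off the line.  By Desargues' axiom its
   result does not depend on b: two applications of Desargues move b to any b'
   off the parallel to OI (for +), resp. off the line Ob (for * ), through b,
   and a third point handles the remaining case.  An injective map f sending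
   lines onto lines, such as a translation, carries the construction on OI with
   auxiliary point b to the same construction on f(OI), with frame f(O), f(I)
   and auxiliary point f(b).  So f is a skew field isomorphism from OI onto
   f(OI), and therefore preserves r(A,B;C) = (B - C)^-1 (A - C). *)

Section DesarguesPlane.
Variables (point line : Type) (inc : point -> line -> Prop).
Hypothesis HA : desargues_affine_plane inc.

Notation is_lt := (is_lt inc).
Notation par := (par inc).
Notation on_OI := (on_OI inc).

Lemma line_unique P Q l m :
  P <> Q -> inc P l -> inc Q l -> inc P m -> inc Q m -> l = m.
Proof.
  destruct HA as [Hline _]. intros HPQ HPl HQl HPm HQm.
  destruct (Hline P Q HPQ) as [n [_ Hn]].
  transitivity n; [symmetry|]; apply Hn; auto.
Qed.

Lemma line_through P Q : P <> Q -> exists l, inc P l /\ inc Q l.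
Proof.
  destruct HA as [Hline _]. intros HPQ.
  destruct (Hline P Q HPQ) as [l [Hl _]]. eauto.
Qed.

Lemma meet_unique X Y l m :
  l <> m -> inc X l -> inc X m -> inc Y l -> inc Y m -> X = Y.
Proof.
  intros Hlm HXl HXm HYl HYm. apply NNPP. intros HXY.
  apply Hlm, (line_unique X Y); auto.
Qed.

Lemma par_refl l : par l l.
Proof. left; reflexivity. Qed.

Lemma par_sym l m : par l m -> par m l.
Proof.
  intros [->|Hd]; [apply par_refl|right].
  intros X [HXm HXl]. apply (Hd X); auto.
Qed.

Lemma par_meet_eq l m X : par l m -> inc X l -> inc X m -> l = m.
Proof. intros [->|Hd] HXl HXm; auto. exfalso; apply (Hd X); auto. Qed.

Lemma parallel_through P l : exists m, inc P m /\ par m l.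
Proof.
  destruct (classic (inc P l)) as [HPl|HPl].
  - exists l; split; [assumption|apply par_refl].
  - destruct HA as [_ [Hplayfair _]].
    destruct (Hplayfair P l HPl) as [m [[HPm Hd] _]].
    exists m; split; [assumption|right].
    intros X [HXm HXl]. apply (Hd X); auto.
Qed.

Lemma parallel_unique P l m m' :
  inc P m -> inc P m' -> par m l -> par m' l -> m = m'.
Proof.
  intros HPm HPm' Hm Hm'.
  destruct (classic (inc P l)) as [HPl|HPl].
  - transitivity l; [|symmetry]; eapply par_meet_eq; eauto.
  - destruct HA as [_ [Hplayfair _]].
    destruct (Hplayfair P l HPl) as [u [_ Hu]].
    assert (Hto_u : forall q, inc P q -> par q l -> u = q).
    { intros q HPq [->|Hd]; [contradiction|].
      apply Hu. split; [assumption|]. intros X [HXl HXq]. apply (Hd X); auto. }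
    transitivity u; [symmetry|]; auto.
Qed.

Lemma par_trans a b c : par a b -> par b c -> par a c.
Proof.
  intros Hab Hbc.
  destruct (classic (exists X, inc X a /\ inc X c)) as [[X [HXa HXc]]|Hno].
  - left. apply (parallel_unique X b); auto. apply par_sym; assumption.
  - right. intros X [HXa HXc]. apply Hno; eauto.
Qed.

Lemma not_par_meet l m : ~ par l m -> exists X, inc X l /\ inc X m.
Proof.
  intros Hlm. apply NNPP. intros Hno. apply Hlm. right.
  intros X [HXl HXm]. apply Hno; eauto.
Qed.

Lemma meets_parallel X l m m' :
  inc X l -> inc X m -> l <> m -> par m' m -> exists Y, inc Y l /\ inc Y m'.
Proof.
  intros HXl HXm Hlm Hm'. apply not_par_meet. intros Hlm'.
  apply Hlm, (par_meet_eq l m X); auto. apply (par_trans _ m'); assumption.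
Qed.

Lemma par_off m l Z X : par m l -> inc Z m -> ~ inc Z l -> inc X m -> ~ inc X l.
Proof.
  intros Hml HZm HZl HXm HXl. apply HZl.
  rewrite <- (par_meet_eq m l X); assumption.
Qed.

Lemma par_off_l m l Z X : par m l -> inc Z m -> ~ inc Z l -> inc X l -> ~ inc X m.
Proof.
  intros Hml HZm HZl HXl HXm. apply HZl.
  rewrite <- (par_meet_eq m l X); assumption.
Qed.

Lemma exists_off_line l : exists P, ~ inc P l.
Proof.
  destruct HA as [_ [_ [[A [B [C Hncol]]] _]]].
  destruct (classic (inc A l)); [|eauto].
  destruct (classic (inc B l)); [|eauto].
  destruct (classic (inc C l)); [|eauto].
  exfalso; apply Hncol; exists l; auto.
Qed.

Lemma exists_off_two_lines l m X Y :
  inc X l -> ~ inc X m -> inc Y m -> ~ inc Y l -> ~ par l m ->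
  exists c, ~ inc c l /\ ~ inc c m.
Proof.
  intros HXl HXm HYm HYl Hlm.
  destruct (parallel_through Y l) as [u [HYu Hu]].
  destruct (parallel_through X m) as [v [HXv Hv]].
  destruct (not_par_meet u v) as [c [Hcu Hcv]].
  { intros Huv. apply Hlm.
    apply (par_trans _ u); [apply par_sym; assumption|].
    apply (par_trans _ v); assumption. }
  exists c. split; [apply (par_off u l Y)|apply (par_off v m X)]; assumption.
Qed.

Lemma two_parallels_cover_par l m u v X1 Y1 X2 Y2 :
  (forall X, inc X l \/ inc X m) -> par m l ->
  inc X1 l -> inc X2 l -> inc Y1 m -> inc Y2 m -> ~ inc Y1 l ->
  inc X1 u -> inc Y1 u -> inc X2 v -> inc Y2 v -> X1 <> X2 -> Y1 <> Y2 -> par u v.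
Proof.
  intros Hcover Hml HX1 HX2 HY1 HY2 HY1l HX1u HY1u HX2v HY2v HX12 HY12.
  assert (HY2l : ~ inc Y2 l) by (apply (par_off m l Y1); assumption).
  assert (HX1m : ~ inc X1 m) by (apply (par_off_l m l Y1); assumption).
  assert (HX2m : ~ inc X2 m) by (apply (par_off_l m l Y1); assumption).
  right. intros Z [HZu HZv]. destruct (Hcover Z) as [HZl|HZm].
  - apply HX12. transitivity Z.
    + apply (meet_unique _ _ u l); auto. intros ->. contradiction.
    + symmetry. apply (meet_unique _ _ v l); auto. intros ->. contradiction.
  - apply HY12. transitivity Z.
    + apply (meet_unique _ _ u m); auto. intros ->. contradiction.
    + symmetry. apply (meet_unique _ _ v m); auto. intros ->. contradiction.
Qed.

Lemma desargues A B C A' B' C' a b c p p' q q' s s' :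
  is_lt A A' a -> is_lt B B' b -> is_lt C C' c -> a <> b -> b <> c -> a <> c ->
  (par a b /\ par b c /\ par a c) \/ (exists Z, inc Z a /\ inc Z b /\ inc Z c) ->
  is_lt A B p -> is_lt A' B' p' -> par p p' ->
  is_lt B C q -> is_lt B' C' q' -> par q q' ->
  is_lt A C s -> is_lt A' C' s' -> par s s'.
Proof.
  destruct HA as [_ [_ [_ Hdes]]].
  intros Ha Hb Hc Hab Hbc Hac Hcenter Hp Hp' Hpp Hq Hq' Hqq Hs Hs'.
  destruct Ha as [HAA' [HAa HA'a]], Hb as [HBB' [HBb HB'b]], Hc as [HCC' [HCc HC'c]].
  destruct Hp as [HAB [HAp HBp]], Hp' as [HA'B' [HA'p' HB'p']].
  destruct Hq as [HBC [HBq HCq]], Hq' as [HB'C' [HB'q' HC'q']].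
  assert (Hp_ne : p <> p').
  { intros <-. apply Hab. apply (line_unique B B'); auto.
    all: rewrite <- (line_unique A A' p a); auto. }
  assert (Hq_ne : q <> q').
  { intros <-. apply Hbc. apply (line_unique C C'); auto.
    all: rewrite <- (line_unique B B' q b); auto. }
  destruct Hs as [HAC [HAs HCs]], Hs' as [HA'C' [HA's' HC's']].
  apply (Hdes A B C A' B' C' a b c p p' q q' s s'); repeat split; assumption.
Qed.

Section ParallelProjection.
Variable l : line.

(* The last step shared by the constructions of A + B and A * B, with P = P1 and
   b = B1. *)
Definition par_proj (P B b S : point) : Prop :=
  exists j n, is_lt B b j /\ inc P n /\ par n j /\ inc S n /\ inc S l.

Lemma par_proj_in P B b S : par_proj P B b S -> inc S l.
Proof. intros (j & n & _ & _ & _ & _ & HSl). assumption. Qed.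

Lemma par_proj_dir_ne B b j n : ~ inc b l -> inc B l -> is_lt B b j -> par n j -> n <> l.
Proof.
  intros Hbl HBl [HBb [HBj Hbj]] Hnj ->. apply Hbl.
  rewrite (par_meet_eq l j B); assumption.
Qed.

Lemma par_proj_exists P B b : ~ inc b l -> inc B l -> exists S, par_proj P B b S.
Proof.
  intros Hbl HBl.
  assert (HBb : B <> b) by (intros ->; contradiction).
  destruct (line_through B b HBb) as [j [HBj Hbj]].
  destruct (parallel_through P j) as [n [HPn Hnj]].
  assert (Hlj : l <> j) by (intros ->; contradiction).
  destruct (meets_parallel B l j n HBl HBj Hlj Hnj) as [S [HSl HSn]].
  exists S, j, n. repeat split; assumption.
Qed.

Lemma par_proj_unique P B b S S' :
  ~ inc b l -> inc B l -> par_proj P B b S -> par_proj P B b S' -> S = S'.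
Proof.
  intros Hbl HBl (j & n & Hj & HPn & Hnj & HSn & HSl) (j' & n' & Hj' & HPn' & Hn'j' & HSn' & HS'l).
  assert (j' = j) by (destruct Hj as [? [? ?]], Hj' as [? [? ?]]; apply (line_unique B b); auto).
  subst j'.
  assert (n' = n) by (apply (parallel_unique P j); assumption). subst n'.
  apply (meet_unique _ _ n l); try assumption.
  apply (par_proj_dir_ne B b j); assumption.
Qed.

Lemma par_proj_fixed P B b S : ~ inc b l -> inc B l -> inc P l -> par_proj P B b S -> S = P.
Proof.
  intros Hbl HBl HPl (j & n & Hj & HPn & Hnj & HSn & HSl).
  apply (meet_unique _ _ n l); try assumption.
  apply (par_proj_dir_ne B b j); assumption.
Qed.

Lemma par_proj_on_axis P B b S j :
  ~ inc b l -> inc B l -> is_lt B b j -> inc P j -> par_proj P B b S -> S = B.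
Proof.
  intros Hbl HBl [HBb [HBj Hbj]] HPj (j' & n & [_ [HBj' Hbj']] & HPn & Hnj & HSn & HSl).
  assert (j' = j) by (apply (line_unique B b); assumption). subst j'.
  assert (n = j) by (apply (par_meet_eq n j P); assumption). subst n.
  apply (meet_unique _ _ j l); try assumption. intros ->. contradiction.
Qed.

Lemma par_proj_neq P B b S m : is_lt b P m -> ~ inc B m -> par_proj P B b S -> B <> S.
Proof.
  intros [HbP [Hbm HPm]] HBm (j & n & [HBb [HBj Hbj]] & HPn & Hnj & HSn & HSl) <-.
  assert (n = j) by (apply (par_meet_eq n j B); assumption). subst n.
  apply HBm. rewrite (line_unique b P m j); assumption.
Qed.

Lemma par_proj_inj P P' B b S m :
  inc P m -> inc P' m -> ~ inc S m -> par_proj P B b S -> par_proj P' B b S -> P = P'.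
Proof.
  intros HPm HP'm HSm (j & n & [HBb [HBj Hbj]] & HPn & Hnj & HSn & HSl)
    (j' & n' & [_ [HBj' Hbj']] & HP'n' & Hn'j' & HSn' & _).
  assert (j' = j) by (apply (line_unique B b); assumption). subst j'.
  assert (n' = n) by (apply (parallel_unique S j); assumption). subst n'.
  apply (meet_unique _ _ n m); try assumption. intros ->. contradiction.
Qed.

Lemma par_proj_cancel P B B' b S :
  ~ inc b l -> ~ inc P l -> inc B l -> inc B' l ->
  par_proj P B b S -> par_proj P B' b S -> B = B'.
Proof.
  intros Hbl HPl HBl HB'l (j & n & [HBb [HBj Hbj]] & HPn & Hnj & HSn & HSl)
    (j' & n' & [HB'b [HB'j' Hbj']] & HPn' & Hn'j' & HSn' & _).
  assert (HPS : P <> S) by (intros ->; contradiction).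
  assert (n' = n) by (apply (line_unique P S); assumption). subst n'.
  assert (j' = j) by (apply (parallel_unique b n); try apply par_sym; assumption).
  subst j'.
  apply (meet_unique _ _ j l); try assumption. intros ->. contradiction.
Qed.

Lemma par_proj_exists_source P b S :
  ~ inc b l -> ~ inc P l -> inc S l -> exists B, inc B l /\ par_proj P B b S.
Proof.
  intros Hbl HPl HSl.
  assert (HPS : P <> S) by (intros ->; contradiction).
  destruct (line_through P S HPS) as [n [HPn HSn]].
  destruct (parallel_through b n) as [j [Hbj Hjn]].
  assert (Hln : l <> n) by (intros ->; contradiction).
  destruct (meets_parallel S l n j HSl HSn Hln Hjn) as [B [HBl HBj]].
  exists B. split; [assumption|].
  exists j, n. repeat split; try assumption.
  - intros ->. contradiction.
  - apply par_sym; assumption.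
Qed.

(* Desargues for the triangles B b b' and S P P'. *)
Lemma par_proj_move P P' B b b' S m m' t t' :
  ~ inc b l -> ~ inc b' l -> inc B l -> ~ inc B m -> ~ inc P l -> ~ inc P' l ->
  is_lt b P m -> is_lt b' P' m' -> m <> m' ->
  (par l m /\ par m m' /\ par l m') \/ (exists Z, inc Z l /\ inc Z m /\ inc Z m') ->
  is_lt b b' t -> is_lt P P' t' -> par t t' ->
  par_proj P B b S -> par_proj P' B b' S.
Proof.
  intros Hbl Hb'l HBl HBm HPl HP'l Hm Hm' Hmm' Hcenter Ht Ht' Htt Hproj.
  assert (HBS := par_proj_neq P B b S m Hm HBm Hproj).
  destruct Hproj as (j & n & Hj & HPn & Hnj & HSn & HSl).
  assert (HBb' : B <> b') by (intros ->; contradiction).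
  assert (HSP' : S <> P') by (intros ->; contradiction).
  destruct (line_through B b' HBb') as [j' [HBj' Hb'j']].
  destruct (line_through S P' HSP') as [n' [HSn' HP'n']].
  exists j', n'. repeat split; try assumption.
  apply par_sym.
  destruct Hm as [HbP [Hbm HPm]], Hm' as [Hb'P' [Hb'm' HP'm']].
  destruct Hj as [HBb [HBj Hbj]], Ht as [Hbb' [Hbt Hb't]], Ht' as [HPP' [HPt' HP't']].
  apply (desargues B b b' S P P' l m m' j n t t' j' n'); repeat split; try assumption.
  all: try (intros ->; contradiction).
  apply par_sym; assumption.
Qed.

End ParallelProjection.

Section Addition.
Variables (O : point) (l : line).
Hypothesis HOl : inc O l.

(* The point P1 of the construction of A + B with auxiliary point b. *)
Definition add_pivot (b A P : point) : Prop :=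
  exists m1 k m2, inc b m1 /\ par m1 l /\ is_lt O b k /\ inc A m2 /\ par m2 k /\
    inc P m1 /\ inc P m2.

Definition add_via (b A B S : point) : Prop :=
  exists P, add_pivot b A P /\ par_proj l P B b S.

Lemma add_pivot_lines_ne b m1 k m2 :
  ~ inc b l -> inc b m1 -> par m1 l -> is_lt O b k -> par m2 k -> m1 <> m2 /\ m1 <> k.
Proof.
  intros Hbl Hbm1 Hm1 [HOb [HOk Hbk]] Hm2.
  assert (HOm1 : ~ inc O m1) by (apply (par_off_l m1 l b); assumption).
  assert (Hm1k : m1 <> k) by (intros ->; contradiction).
  split; [|assumption].
  intros <-. apply Hm1k, (par_meet_eq m1 k b); assumption.
Qed.

Lemma add_pivot_exists b A : ~ inc b l -> exists P, add_pivot b A P.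
Proof.
  intros Hbl.
  destruct (parallel_through b l) as [m1 [Hbm1 Hm1]].
  assert (HOb : O <> b) by (intros ->; contradiction).
  destruct (line_through O b HOb) as [k [HOk Hbk]].
  destruct (parallel_through A k) as [m2 [HAm2 Hm2]].
  assert (Hm1k : m1 <> k) by (intros ->; apply (par_off_l k l b O); assumption).
  destruct (meets_parallel b m1 k m2 Hbm1 Hbk Hm1k Hm2) as [P [HPm1 HPm2]].
  exists P, m1, k, m2. repeat split; assumption.
Qed.

Lemma add_pivot_on_par b A P m : add_pivot b A P -> inc b m -> par m l -> inc P m.
Proof.
  intros (m1 & k & m2 & Hbm1 & Hm1 & _ & _ & _ & HPm1 & _) Hbm Hm.
  rewrite <- (parallel_unique b l m1 m); assumption.
Qed.

Lemma add_pivot_off b A P : ~ inc b l -> add_pivot b A P -> ~ inc P l.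
Proof.
  intros Hbl (m1 & k & m2 & Hbm1 & Hm1 & _ & _ & _ & HPm1 & _).
  apply (par_off m1 l b); assumption.
Qed.

Lemma add_pivot_unique b A P P' : ~ inc b l -> add_pivot b A P -> add_pivot b A P' -> P = P'.
Proof.
  intros Hbl (m1 & k & m2 & Hbm1 & Hm1 & Hk & HAm2 & Hm2 & HPm1 & HPm2)
    (m1' & k' & m2' & Hbm1' & Hm1' & Hk' & HAm2' & Hm2' & HP'm1' & HP'm2').
  assert (m1' = m1) by (apply (parallel_unique b l); assumption). subst m1'.
  assert (k' = k) by (destruct Hk as [? [? ?]], Hk' as [? [? ?]]; apply (line_unique O b); auto).
  subst k'.
  assert (m2' = m2) by (apply (parallel_unique A k); assumption). subst m2'.
  apply (meet_unique _ _ m1 m2); try assumption.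
  apply (add_pivot_lines_ne b m1 k m2); assumption.
Qed.

Lemma add_pivot_zero b P : ~ inc b l -> add_pivot b O P -> P = b.
Proof.
  intros Hbl (m1 & k & m2 & Hbm1 & Hm1 & Hk & HOm2 & Hm2 & HPm1 & HPm2).
  pose proof Hk as [_ [HOk Hbk]].
  assert (m2 = k) by (apply (par_meet_eq m2 k O); assumption). subst m2.
  apply (meet_unique _ _ m1 k); try assumption.
  apply (add_pivot_lines_ne b m1 k k); assumption.
Qed.

Lemma add_pivot_neq b A P : ~ inc b l -> inc A l -> A <> O -> add_pivot b A P -> P <> b.
Proof.
  intros Hbl HAl HAO (m1 & k & m2 & Hbm1 & Hm1 & [HOb [HOk Hbk]] & HAm2 & Hm2 & HPm1 & HPm2) ->.
  assert (m2 = k) by (apply (par_meet_eq m2 k b); assumption). subst m2.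
  apply HAO, (meet_unique _ _ k l); try assumption. intros ->. contradiction.
Qed.

Lemma add_pivot_cancel b A A' P :
  ~ inc b l -> inc A l -> inc A' l -> add_pivot b A P -> add_pivot b A' P -> A = A'.
Proof.
  intros Hbl HAl HA'l (m1 & k & m2 & Hbm1 & Hm1 & Hk & HAm2 & Hm2 & HPm1 & HPm2)
    (m1' & k' & m2' & Hbm1' & Hm1' & Hk' & HA'm2' & Hm2' & HPm1' & HPm2').
  assert (k' = k) by (destruct Hk as [? [? ?]], Hk' as [? [? ?]]; apply (line_unique O b); auto).
  subst k'.
  assert (m2' = m2) by (apply (parallel_unique P k); assumption). subst m2'.
  assert (HPl : ~ inc P l) by (apply (par_off m1 l b); assumption).
  apply (meet_unique _ _ m2 l); try assumption. intros ->. contradiction.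
Qed.

(* Desargues for the triangles b O b' and P A P', with vertex lines parallel to l. *)
Lemma add_pivot_move b b' A P P' m t t' :
  ~ inc b l -> ~ inc b' l -> inc A l -> A <> O -> inc b m -> par m l -> ~ inc b' m ->
  add_pivot b A P -> add_pivot b' A P' -> is_lt b b' t -> is_lt P P' t' -> par t t'.
Proof.
  intros Hbl Hb'l HAl HAO Hbm Hm Hb'm Hpiv Hpiv' Ht Ht'.
  assert (HPb := add_pivot_neq b A P Hbl HAl HAO Hpiv).
  assert (HP'b' := add_pivot_neq b' A P' Hb'l HAl HAO Hpiv').
  assert (HPl := add_pivot_off b A P Hbl Hpiv).
  assert (HP'l := add_pivot_off b' A P' Hb'l Hpiv').
  destruct Hpiv as (m1 & k & m2 & Hbm1 & Hm1 & [HOb [HOk Hbk]] & HAm2 & Hm2 & HPm1 & HPm2).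
  destruct Hpiv' as (m1' & k' & m2' & Hb'm1' & Hm1' & [HOb' [HOk' Hb'k']] & HAm2' & Hm2' &
    HP'm1' & HP'm2').
  destruct Ht as [Hbb' [Hbt Hb't]], Ht' as [HPP' [HPt' HP't']].
  assert (Hb'm1 : ~ inc b' m1) by (rewrite (parallel_unique b l m1 m); assumption).
  apply (desargues b O b' P A P' m1 l m1' k m2 k' m2' t t'); repeat split; try assumption.
  all: try (intros ->; contradiction).
  - left. split; [assumption|split].
    + apply par_sym; assumption.
    + apply (par_trans _ l); [|apply par_sym]; assumption.
  - apply par_sym; assumption.
  - apply par_sym; assumption.
Qed.

Lemma add_via_exists b A B : ~ inc b l -> inc B l -> exists S, add_via b A B S.
Proof.
  intros Hbl HBl.
  destruct (add_pivot_exists b A Hbl) as [P Hpiv].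
  destruct (par_proj_exists l P B b Hbl HBl) as [S Hproj].
  exists S, P. split; assumption.
Qed.

Lemma add_via_unique b A B S S' :
  ~ inc b l -> inc B l -> add_via b A B S -> add_via b A B S' -> S = S'.
Proof.
  intros Hbl HBl [P [Hpiv Hproj]] [P' [Hpiv' Hproj']].
  rewrite (add_pivot_unique b A P' P Hbl Hpiv' Hpiv) in Hproj'.
  apply (par_proj_unique l P B b); assumption.
Qed.

Lemma add_via_cancel_l b A A' B S :
  ~ inc b l -> inc A l -> inc A' l -> add_via b A B S -> add_via b A' B S -> A = A'.
Proof.
  intros Hbl HAl HA'l [P [Hpiv Hproj]] [P' [Hpiv' Hproj']].
  destruct (parallel_through b l) as [m1 [Hbm1 Hm1]].
  assert (HSl := par_proj_in l P B b S Hproj).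
  assert (P' = P).
  { apply (par_proj_inj l P' P B b S m1); try assumption.
    - apply (add_pivot_on_par b A'); assumption.
    - apply (add_pivot_on_par b A); assumption.
    - apply (par_off_l m1 l b); assumption. }
  subst P'. apply (add_pivot_cancel b A A' P); assumption.
Qed.

Lemma add_via_cancel_r b A B B' S :
  ~ inc b l -> inc B l -> inc B' l -> add_via b A B S -> add_via b A B' S -> B = B'.
Proof.
  intros Hbl HBl HB'l [P [Hpiv Hproj]] [P' [Hpiv' Hproj']].
  rewrite (add_pivot_unique b A P' P Hbl Hpiv' Hpiv) in Hproj'.
  apply (par_proj_cancel l P B B' b S); try assumption.
  apply (add_pivot_off b A); assumption.
Qed.

Lemma add_via_opp_exists b A : ~ inc b l -> exists B, inc B l /\ add_via b A B O.
Proof.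
  intros Hbl.
  destruct (add_pivot_exists b A Hbl) as [P Hpiv].
  destruct (par_proj_exists_source l P b O) as [B [HBl Hproj]]; try assumption.
  { apply (add_pivot_off b A); assumption. }
  exists B. split; [assumption|]. exists P. split; assumption.
Qed.

Lemma add_via_zero_l b B S : ~ inc b l -> inc B l -> add_via b O B S -> S = B.
Proof.
  intros Hbl HBl [P [Hpiv Hproj]].
  rewrite (add_pivot_zero b P Hbl Hpiv) in Hproj.
  assert (HBb : B <> b) by (intros ->; contradiction).
  destruct (line_through B b HBb) as [j [HBj Hbj]].
  apply (par_proj_on_axis l b B b S j); repeat split; assumption.
Qed.

Lemma add_via_neq b A B S : ~ inc b l -> inc A l -> inc B l -> A <> O -> add_via b A B S -> B <> S.
Proof.
  intros Hbl HAl HBl HAO [P [Hpiv Hproj]].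
  destruct (parallel_through b l) as [m1 [Hbm1 Hm1]].
  apply (par_proj_neq l P B b S m1); [repeat split|..]; try assumption.
  - apply not_eq_sym, (add_pivot_neq b A); assumption.
  - apply (add_pivot_on_par b A); assumption.
  - apply (par_off_l m1 l b); assumption.
Qed.

Lemma add_via_move b b' A B S m1 :
  ~ inc b l -> ~ inc b' l -> inc A l -> inc B l -> A <> O ->
  inc b m1 -> par m1 l -> ~ inc b' m1 -> add_via b A B S -> add_via b' A B S.
Proof.
  intros Hbl Hb'l HAl HBl HAO Hbm1 Hm1 Hb'm1 [P [Hpiv Hproj]].
  destruct (add_pivot_exists b' A Hb'l) as [P' Hpiv'].
  exists P'. split; [assumption|].
  destruct (parallel_through b' l) as [m1' [Hb'm1' Hm1']].
  assert (HPm1 := add_pivot_on_par b A P m1 Hpiv Hbm1 Hm1).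
  assert (HP'm1' := add_pivot_on_par b' A P' m1' Hpiv' Hb'm1' Hm1').
  assert (Hm1m1' : m1 <> m1') by (intros <-; contradiction).
  assert (Hbb' : b <> b') by (intros ->; contradiction).
  assert (HPP' : P <> P').
  { intros <-. apply Hm1m1', (parallel_unique P l); assumption. }
  destruct (line_through b b' Hbb') as [t [Hbt Hb't]].
  destruct (line_through P P' HPP') as [t' [HPt' HP't']].
  apply (par_proj_move l P P' B b b' S m1 m1' t t'); repeat split; try assumption.
  - apply (par_off_l m1 l b); assumption.
  - apply (add_pivot_off b A); assumption.
  - apply (add_pivot_off b' A); assumption.
  - apply not_eq_sym, (add_pivot_neq b A); assumption.
  - apply not_eq_sym, (add_pivot_neq b' A); assumption.
  - left. repeat split.
    + apply par_sym; assumption.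
    + apply (par_trans _ l); [|apply par_sym]; assumption.
    + apply par_sym; assumption.
  - apply (add_pivot_move b b' A P P' m1); repeat split; assumption.
Qed.

(* Needed when every point lies on l or on the parallel through b, as in the
   plane of order 2: then no third auxiliary point is available. *)
Lemma add_via_move_cover b b' A B S m1 :
  ~ inc b l -> inc b m1 -> par m1 l -> inc b' m1 -> b <> b' ->
  (forall X, inc X l \/ inc X m1) -> inc A l -> inc B l -> A <> O ->
  add_via b A B S -> add_via b' A B S.
Proof.
  intros Hbl Hbm1 Hm1 Hb'm1 Hbb' Hcover HAl HBl HAO Hsum.
  assert (HBS := add_via_neq b A B S Hbl HAl HBl HAO Hsum).
  assert (HSl : inc S l)
    by (destruct Hsum as [P [_ Hproj]]; apply (par_proj_in l P B b); assumption).
  assert (Hb'l : ~ inc b' l) by (apply (par_off m1 l b); assumption).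
  assert (HOb' : O <> b') by (intros ->; contradiction).
  assert (HAb : A <> b) by (intros ->; contradiction).
  assert (HBb' : B <> b') by (intros ->; contradiction).
  assert (HSb : S <> b) by (intros ->; contradiction).
  destruct (line_through O b' HOb') as [k' [HOk' Hb'k']].
  destruct (line_through A b HAb) as [m2 [HAm2 Hbm2]].
  destruct (line_through B b' HBb') as [j [HBj Hb'j]].
  destruct (line_through S b HSb) as [n [HSn Hbn]].
  exists b. split.
  - exists m1, k', m2. repeat split; try assumption.
    apply (two_parallels_cover_par l m1 m2 k' A b O b'); assumption.
  - exists j, n. repeat split; try assumption.
    apply (two_parallels_cover_par l m1 n j S b B b'); auto.
Qed.

Lemma add_via_indep b b' A B S :
  ~ inc b l -> ~ inc b' l -> inc A l -> inc B l -> add_via b A B S -> add_via b' A B S.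
Proof.
  intros Hbl Hb'l HAl HBl Hsum.
  destruct (classic (A = O)) as [->|HAO].
  { rewrite (add_via_zero_l b B S Hbl HBl Hsum).
    destruct (add_via_exists b' O B Hb'l HBl) as [S' Hsum'].
    rewrite (add_via_zero_l b' B S' Hb'l HBl Hsum') in Hsum'. assumption. }
  destruct (parallel_through b l) as [m1 [Hbm1 Hm1]].
  destruct (classic (inc b' m1)) as [Hb'm1|Hb'm1].
  2: apply (add_via_move b b' A B S m1); assumption.
  destruct (classic (b = b')) as [<-|Hbb']; [assumption|].
  destruct (classic (exists c, ~ inc c l /\ ~ inc c m1)) as [[c [Hcl Hcm1]]|Hcover].
  - destruct (parallel_through c l) as [mc [Hcmc Hmc]].
    assert (Hb'mc : ~ inc b' mc).
    { intros Hb'mc. apply Hcm1. rewrite (parallel_unique b' l m1 mc); assumption. }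
    apply (add_via_move c b' A B S mc); try assumption.
    apply (add_via_move b c A B S m1); assumption.
  - apply (add_via_move_cover b b' A B S m1); try assumption.
    intros X. apply NNPP. intros HX. apply Hcover. exists X. tauto.
Qed.

End Addition.

Section Multiplication.
Variables (O I : point) (l : line).
Hypotheses (HOI : O <> I) (HOl : inc O l) (HIl : inc I l).

(* The point P1 of the construction of A * B with auxiliary point b. *)
Definition mul_pivot (b A P : point) : Prop :=
  exists h m2 k, is_lt I b h /\ inc A m2 /\ par m2 h /\ is_lt O b k /\ inc P m2 /\ inc P k.

Definition mul_via (b A B S : point) : Prop :=
  exists P, mul_pivot b A P /\ par_proj l P B b S.

Lemma mul_pivot_lines_ne b h k m2 :
  ~ inc b l -> is_lt I b h -> is_lt O b k -> par m2 h ->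
  ~ inc I k /\ h <> k /\ k <> l /\ h <> l /\ m2 <> k.
Proof.
  intros Hbl [HIb [HIh Hbh]] [HOb [HOk Hbk]] Hm2.
  assert (HIk : ~ inc I k).
  { intros HIk. apply Hbl. rewrite (line_unique O I l k); assumption. }
  assert (Hhk : h <> k) by (intros ->; contradiction).
  repeat split; try assumption; try (intros ->; contradiction).
  intros ->. apply Hhk. symmetry. apply (par_meet_eq k h b); assumption.
Qed.

Lemma mul_pivot_exists b A : ~ inc b l -> exists P, mul_pivot b A P.
Proof.
  intros Hbl.
  assert (HIb : I <> b) by (intros ->; contradiction).
  assert (HOb : O <> b) by (intros ->; contradiction).
  destruct (line_through I b HIb) as [h [HIh Hbh]].
  destruct (parallel_through A h) as [m2 [HAm2 Hm2]].
  destruct (line_through O b HOb) as [k [HOk Hbk]].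
  destruct (mul_pivot_lines_ne b h k m2) as (_ & Hhk & _); try (repeat split; assumption).
  destruct (meets_parallel b k h m2 Hbk Hbh (not_eq_sym Hhk) Hm2) as [P [HPk HPm2]].
  exists P, h, m2, k. repeat split; assumption.
Qed.

Lemma mul_pivot_unique b A P P' : ~ inc b l -> mul_pivot b A P -> mul_pivot b A P' -> P = P'.
Proof.
  intros Hbl (h & m2 & k & Hh & HAm2 & Hm2 & Hk & HPm2 & HPk)
    (h' & m2' & k' & Hh' & HAm2' & Hm2' & Hk' & HP'm2' & HP'k').
  assert (h' = h) by (destruct Hh as [? [? ?]], Hh' as [? [? ?]]; apply (line_unique I b); auto).
  subst h'.
  assert (k' = k) by (destruct Hk as [? [? ?]], Hk' as [? [? ?]]; apply (line_unique O b); auto).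
  subst k'.
  assert (m2' = m2) by (apply (parallel_unique A h); assumption). subst m2'.
  apply (meet_unique _ _ m2 k); try assumption.
  apply (mul_pivot_lines_ne b h k m2); assumption.
Qed.

Lemma mul_pivot_on_axis b A P k : mul_pivot b A P -> is_lt O b k -> inc P k.
Proof.
  intros (h & m2 & k' & _ & _ & _ & [HOb [HOk' Hbk']] & _ & HPk') [_ [HOk Hbk]].
  rewrite <- (line_unique O b k' k); assumption.
Qed.

Lemma mul_pivot_zero b P : ~ inc b l -> mul_pivot b O P -> P = O.
Proof.
  intros Hbl (h & m2 & k & Hh & HOm2 & Hm2 & Hk & HPm2 & HPk).
  pose proof Hk as [_ [HOk _]].
  apply (meet_unique _ _ m2 k); try assumption.
  apply (mul_pivot_lines_ne b h k m2); assumption.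
Qed.

Lemma mul_pivot_one b P : ~ inc b l -> mul_pivot b I P -> P = b.
Proof.
  intros Hbl (h & m2 & k & Hh & HIm2 & Hm2 & Hk & HPm2 & HPk).
  destruct (mul_pivot_lines_ne b h k m2) as (_ & Hhk & _); try assumption.
  pose proof Hh as [_ [HIh Hbh]]. pose proof Hk as [_ [_ Hbk]].
  assert (m2 = h) by (apply (par_meet_eq m2 h I); assumption). subst m2.
  apply (meet_unique _ _ h k); assumption.
Qed.

Lemma mul_pivot_off b A P : ~ inc b l -> inc A l -> A <> O -> mul_pivot b A P -> ~ inc P l.
Proof.
  intros Hbl HAl HAO (h & m2 & k & Hh & HAm2 & Hm2 & Hk & HPm2 & HPk) HPl.
  destruct (mul_pivot_lines_ne b h k m2) as (_ & _ & Hkl & Hhl & _); try assumption.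
  pose proof Hh as [_ [HIh _]]. pose proof Hk as [_ [HOk _]].
  assert (P = O) by (apply (meet_unique _ _ k l); assumption). subst P.
  assert (m2 = l) by (apply (line_unique A O); assumption). subst m2.
  apply Hhl. symmetry. apply (par_meet_eq l h I); assumption.
Qed.

Lemma mul_pivot_neq b A P : ~ inc b l -> inc A l -> A <> I -> mul_pivot b A P -> P <> b.
Proof.
  intros Hbl HAl HAI (h & m2 & k & Hh & HAm2 & Hm2 & Hk & HPm2 & HPk) ->.
  destruct (mul_pivot_lines_ne b h k m2) as (_ & _ & _ & Hhl & _); try assumption.
  pose proof Hh as [_ [HIh Hbh]].
  assert (m2 = h) by (apply (par_meet_eq m2 h b); assumption). subst m2.
  apply HAI, (meet_unique _ _ h l); assumption.
Qed.

(* Desargues for the triangles b I b' and P A P', with vertex lines through O. *)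
Lemma mul_pivot_move b b' A P P' k t t' :
  ~ inc b l -> ~ inc b' l -> inc A l -> A <> O -> A <> I ->
  is_lt O b k -> ~ inc b' k ->
  mul_pivot b A P -> mul_pivot b' A P' -> is_lt b b' t -> is_lt P P' t' -> par t t'.
Proof.
  intros Hbl Hb'l HAl HAO HAI Hk Hb'k Hpiv Hpiv' Ht Ht'.
  assert (HPb := mul_pivot_neq b A P Hbl HAl HAI Hpiv).
  assert (HP'b' := mul_pivot_neq b' A P' Hb'l HAl HAI Hpiv').
  assert (HPl := mul_pivot_off b A P Hbl HAl HAO Hpiv).
  assert (HP'l := mul_pivot_off b' A P' Hb'l HAl HAO Hpiv').
  assert (HPk := mul_pivot_on_axis b A P k Hpiv Hk).
  destruct Hpiv as (h & m2 & k0 & Hh & HAm2 & Hm2 & _ & HPm2 & _).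
  destruct Hpiv' as (h' & m2' & k' & Hh' & HAm2' & Hm2' & Hk' & HP'm2' & HP'k').
  destruct (mul_pivot_lines_ne b h k m2) as (_ & _ & Hkl & _); try assumption.
  destruct (mul_pivot_lines_ne b' h' k' m2') as (_ & _ & Hk'l & _); try assumption.
  destruct Hh as [HIb [HIh Hbh]], Hh' as [HIb' [HIh' Hb'h']].
  destruct Hk as [HOb [HOk Hbk]], Hk' as [HOb' [HOk' Hb'k']].
  destruct Ht as [Hbb' [Hbt Hb't]], Ht' as [HPP' [HPt' HP't']].
  apply (desargues b I b' P A P' k l k' h m2 h' m2' t t'); repeat split; try assumption.
  all: try (intros ->; contradiction).
  - right. exists O. repeat split; assumption.
  - apply par_sym; assumption.
  - apply par_sym; assumption.
Qed.

Lemma mul_via_exists b A B : ~ inc b l -> inc B l -> exists S, mul_via b A B S.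
Proof.
  intros Hbl HBl.
  destruct (mul_pivot_exists b A Hbl) as [P Hpiv].
  destruct (par_proj_exists l P B b Hbl HBl) as [S Hproj].
  exists S, P. split; assumption.
Qed.

Lemma mul_via_unique b A B S S' :
  ~ inc b l -> inc B l -> mul_via b A B S -> mul_via b A B S' -> S = S'.
Proof.
  intros Hbl HBl [P [Hpiv Hproj]] [P' [Hpiv' Hproj']].
  rewrite (mul_pivot_unique b A P' P Hbl Hpiv' Hpiv) in Hproj'.
  apply (par_proj_unique l P B b); assumption.
Qed.

Lemma mul_via_cancel_r b A B B' S :
  ~ inc b l -> inc A l -> A <> O -> inc B l -> inc B' l ->
  mul_via b A B S -> mul_via b A B' S -> B = B'.
Proof.
  intros Hbl HAl HAO HBl HB'l [P [Hpiv Hproj]] [P' [Hpiv' Hproj']].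
  rewrite (mul_pivot_unique b A P' P Hbl Hpiv' Hpiv) in Hproj'.
  apply (par_proj_cancel l P B B' b S); try assumption.
  apply (mul_pivot_off b A); assumption.
Qed.

Lemma mul_via_inv_exists b A :
  ~ inc b l -> inc A l -> A <> O -> exists B, inc B l /\ mul_via b A B I.
Proof.
  intros Hbl HAl HAO.
  destruct (mul_pivot_exists b A Hbl) as [P Hpiv].
  destruct (par_proj_exists_source l P b I) as [B [HBl Hproj]]; try assumption.
  { apply (mul_pivot_off b A); assumption. }
  exists B. split; [assumption|]. exists P. split; assumption.
Qed.

Lemma mul_via_zero_l b B S : ~ inc b l -> inc B l -> mul_via b O B S -> S = O.
Proof.
  intros Hbl HBl [P [Hpiv Hproj]].
  rewrite (mul_pivot_zero b P Hbl Hpiv) in Hproj.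
  apply (par_proj_fixed l O B b); assumption.
Qed.

Lemma mul_via_zero_r b A S : ~ inc b l -> mul_via b A O S -> S = O.
Proof.
  intros Hbl [P [Hpiv Hproj]].
  assert (HOb : O <> b) by (intros ->; contradiction).
  destruct (line_through O b HOb) as [k [HOk Hbk]].
  apply (par_proj_on_axis l P O b S k); try (repeat split; assumption).
  apply (mul_pivot_on_axis b A); repeat split; assumption.
Qed.

Lemma mul_via_one_l b B S : ~ inc b l -> inc B l -> mul_via b I B S -> S = B.
Proof.
  intros Hbl HBl [P [Hpiv Hproj]].
  rewrite (mul_pivot_one b P Hbl Hpiv) in Hproj.
  assert (HBb : B <> b) by (intros ->; contradiction).
  destruct (line_through B b HBb) as [j [HBj Hbj]].
  apply (par_proj_on_axis l b B b S j); repeat split; assumption.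
Qed.

Lemma mul_via_move b b' A B S k :
  ~ inc b l -> ~ inc b' l -> inc A l -> inc B l -> A <> O -> A <> I -> B <> O ->
  is_lt O b k -> ~ inc b' k -> mul_via b A B S -> mul_via b' A B S.
Proof.
  intros Hbl Hb'l HAl HBl HAO HAI HBO Hk Hb'k [P [Hpiv Hproj]].
  destruct (mul_pivot_exists b' A Hb'l) as [P' Hpiv'].
  exists P'. split; [assumption|].
  pose proof Hk as [HOb [HOk Hbk]].
  assert (HOb' : O <> b') by (intros ->; contradiction).
  destruct (line_through O b' HOb') as [k' [HOk' Hb'k']].
  assert (HPk := mul_pivot_on_axis b A P k Hpiv Hk).
  assert (HP'k' : inc P' k') by (apply (mul_pivot_on_axis b' A); repeat split; assumption).
  assert (HPl := mul_pivot_off b A P Hbl HAl HAO Hpiv).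
  assert (Hkk' : k <> k') by (intros <-; contradiction).
  assert (Hbb' : b <> b') by (intros ->; contradiction).
  assert (HPP' : P <> P').
  { intros <-. apply HPl. rewrite (meet_unique P O k k'); assumption. }
  destruct (line_through b b' Hbb') as [t [Hbt Hb't]].
  destruct (line_through P P' HPP') as [t' [HPt' HP't']].
  apply (par_proj_move l P P' B b b' S k k' t t'); repeat split; try assumption.
  - intros HBk. apply HBO, (meet_unique B O k l); try assumption.
    intros ->. contradiction.
  - apply (mul_pivot_off b' A); assumption.
  - apply not_eq_sym, (mul_pivot_neq b A); assumption.
  - apply not_eq_sym, (mul_pivot_neq b' A); assumption.
  - right. exists O. repeat split; assumption.
  - apply (mul_pivot_move b b' A P P' k); repeat split; assumption.
Qed.

Lemma mul_via_indep b b' A B S :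
  ~ inc b l -> ~ inc b' l -> inc A l -> inc B l -> mul_via b A B S -> mul_via b' A B S.
Proof.
  intros Hbl Hb'l HAl HBl Hprod.
  destruct (mul_via_exists b' A B Hb'l HBl) as [S' Hprod'].
  destruct (classic (A = O)) as [->|HAO].
  { rewrite (mul_via_zero_l b B S Hbl HBl Hprod).
    rewrite (mul_via_zero_l b' B S' Hb'l HBl Hprod') in Hprod'. assumption. }
  destruct (classic (B = O)) as [->|HBO].
  { rewrite (mul_via_zero_r b A S Hbl Hprod).
    rewrite (mul_via_zero_r b' A S' Hb'l Hprod') in Hprod'. assumption. }
  destruct (classic (A = I)) as [->|HAI].
  { rewrite (mul_via_one_l b B S Hbl HBl Hprod).
    rewrite (mul_via_one_l b' B S' Hb'l HBl Hprod') in Hprod'. assumption. }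
  clear S' Hprod'.
  assert (HOb : O <> b) by (intros ->; contradiction).
  destruct (line_through O b HOb) as [k [HOk Hbk]].
  destruct (classic (inc b' k)) as [Hb'k|Hb'k].
  2: apply (mul_via_move b b' A B S k); repeat split; assumption.
  destruct (classic (b = b')) as [<-|Hbb']; [assumption|].
  assert (HIk : ~ inc I k).
  { intros HIk. apply Hbl. rewrite (line_unique O I l k); assumption. }
  destruct (exists_off_two_lines l k I b) as [c [Hcl Hck]]; try assumption.
  { intros Hlk. apply HIk. rewrite <- (par_meet_eq l k O); assumption. }
  assert (HOc : O <> c) by (intros ->; contradiction).
  destruct (line_through O c HOc) as [kc [HOkc Hckc]].
  apply (mul_via_move c b' A B S kc); repeat split; try assumption.
  - intros Hb'kc. apply Hck. rewrite (line_unique O b' k kc); try assumption.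
    intros ->. contradiction.
  - apply (mul_via_move b c A B S k); repeat split; assumption.
Qed.

End Multiplication.

Lemma choose_pt_spec d (Pr Q : point -> Prop) :
  (exists x, Pr x) -> (forall x, Pr x -> Q x) -> Q (choose_pt d Pr).
Proof. intros Hex HQ. apply HQ. unfold choose_pt. apply epsilon_spec. assumption. Qed.

Section Frame.
Variables (O I : point) (l : line).
Hypothesis Hl : is_lt O I l.

Lemma on_OI_iff X : on_OI O I X <-> inc X l.
Proof.
  destruct Hl as [HOI [HOl HIl]]. split.
  - intros (l' & [_ [HOl' HIl']] & HXl'). rewrite (line_unique O I l l'); assumption.
  - intros HXl. exists l. split; assumption.
Qed.

Lemma aux_pt_off : ~ inc (aux_pt inc O I) l.
Proof.
  unfold aux_pt. apply choose_pt_spec with (Pr := fun X => forall l', is_lt O I l' -> ~ inc X l').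
  - destruct (exists_off_line l) as [X HXl]. exists X.
    intros l' Hl'. destruct Hl as [HOI [HOl HIl]], Hl' as [_ [HOl' HIl']].
    rewrite <- (line_unique O I l l'); assumption.
  - intros X HX. apply HX, Hl.
Qed.

Lemma add_OI_spec b A B :
  ~ inc b l -> inc A l -> inc B l -> add_via O l b A B (add_OI inc O I A B).
Proof.
  intros Hbl HAl HBl. destruct Hl as [HOI [HOl HIl]].
  apply (add_via_indep O l HOl (aux_pt inc O I)); try assumption; [apply aux_pt_off|].
  unfold add_OI. apply choose_pt_spec.
  - destruct (add_via_exists O l HOl (aux_pt inc O I) A B aux_pt_off HBl)
      as (S & P & (m1 & k & m2 & Hpiv) & (j & n & Hproj)).
    exists S, l, m1, k, m2, j, n, P. unfold Defs.is_lt in *. tauto.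
  - intros S (l' & m1 & k & m2 & j & n & P & [_ [HOl' HIl']] & H).
    rewrite <- (line_unique O I l l') in H; try assumption.
    exists P. split; [exists m1, k, m2 | exists j, n]; tauto.
Qed.

Lemma add_OI_eq b A B S :
  ~ inc b l -> inc A l -> inc B l -> add_via O l b A B S -> add_OI inc O I A B = S.
Proof.
  intros Hbl HAl HBl Hsum. pose proof Hl as [HOI [HOl HIl]].
  apply (add_via_unique O l HOl b A B); try assumption.
  apply add_OI_spec; assumption.
Qed.

Lemma mul_OI_spec b A B :
  ~ inc b l -> inc A l -> inc B l -> mul_via O I l b A B (mul_OI inc O I A B).
Proof.
  intros Hbl HAl HBl. destruct Hl as [HOI [HOl HIl]].
  apply (mul_via_indep O I l HOI HOl HIl (aux_pt inc O I)); try assumption; [apply aux_pt_off|].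
  unfold mul_OI. apply choose_pt_spec.
  - destruct (mul_via_exists O I l HOI HOl HIl (aux_pt inc O I) A B aux_pt_off HBl)
      as (S & P & (h & m2 & k & Hpiv) & (j & n & Hproj)).
    exists S, l, h, m2, k, j, n, P. unfold Defs.is_lt in *. tauto.
  - intros S (l' & h & m2 & k & j & n & P & [_ [HOl' HIl']] & H).
    rewrite <- (line_unique O I l l') in H; try assumption.
    exists P. split; [exists h, m2, k | exists j, n]; tauto.
Qed.

Lemma mul_OI_eq b A B S :
  ~ inc b l -> inc A l -> inc B l -> mul_via O I l b A B S -> mul_OI inc O I A B = S.
Proof.
  intros Hbl HAl HBl Hprod. pose proof Hl as [HOI [HOl HIl]].
  apply (mul_via_unique O I l HOI HOl HIl b A B); try assumption.
  apply mul_OI_spec; assumption.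
Qed.

Lemma opp_OI_spec b A :
  ~ inc b l -> inc A l -> inc (opp_OI inc O I A) l /\ add_via O l b A (opp_OI inc O I A) O.
Proof.
  intros Hbl HAl. pose proof Hl as [HOI [HOl HIl]].
  unfold opp_OI. apply choose_pt_spec.
  - destruct (add_via_opp_exists O l HOl b A Hbl) as [B [HBl Hsum]].
    exists B. rewrite on_OI_iff. split; [assumption|].
    apply (add_OI_eq b); assumption.
  - intros B [HB Hsum]. rewrite on_OI_iff in HB. split; [assumption|].
    assert (Hspec := add_OI_spec b A B Hbl HAl HB). rewrite Hsum in Hspec. exact Hspec.
Qed.

Lemma opp_OI_eq b A B :
  ~ inc b l -> inc A l -> inc B l -> add_via O l b A B O -> opp_OI inc O I A = B.
Proof.
  intros Hbl HAl HBl Hsum. destruct (opp_OI_spec b A Hbl HAl) as [Hopp Hsum'].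
  pose proof Hl as [_ [HOl _]].
  apply (add_via_cancel_r O l HOl b A _ _ O); assumption.
Qed.

Lemma inv_OI_spec b A :
  ~ inc b l -> inc A l -> A <> O ->
  inc (inv_OI inc O I A) l /\ mul_via O I l b A (inv_OI inc O I A) I.
Proof.
  intros Hbl HAl HAO. pose proof Hl as [HOI [HOl HIl]].
  unfold inv_OI. apply choose_pt_spec.
  - destruct (mul_via_inv_exists O I l HOI HOl HIl b A Hbl HAl HAO) as [B [HBl Hprod]].
    exists B. rewrite on_OI_iff. split; [assumption|].
    apply (mul_OI_eq b); assumption.
  - intros B [HB Hprod]. rewrite on_OI_iff in HB. split; [assumption|].
    assert (Hspec := mul_OI_spec b A B Hbl HAl HB). rewrite Hprod in Hspec. exact Hspec.
Qed.

Lemma inv_OI_eq b A B :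
  ~ inc b l -> inc A l -> A <> O -> inc B l -> mul_via O I l b A B I -> inv_OI inc O I A = B.
Proof.
  intros Hbl HAl HAO HBl Hprod. destruct (inv_OI_spec b A Hbl HAl HAO) as [Hinv Hprod'].
  pose proof Hl as [HOI [HOl HIl]].
  apply (mul_via_cancel_r O I l HOI HOl HIl b A _ _ I); assumption.
Qed.

Lemma sub_OI_in A B : inc A l -> inc B l -> inc (sub_OI inc O I A B) l.
Proof.
  intros HAl HBl. pose proof aux_pt_off as Hbl.
  destruct (opp_OI_spec _ B Hbl HBl) as [Hopp _].
  destruct (add_OI_spec _ A _ Hbl HAl Hopp) as [P [_ Hproj]].
  apply (par_proj_in l P _ _ _ Hproj).
Qed.

Lemma sub_OI_neq0 A B : inc A l -> inc B l -> A <> B -> sub_OI inc O I A B <> O.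
Proof.
  intros HAl HBl HAB Hsub. apply HAB. pose proof Hl as [_ [HOl _]].
  pose proof aux_pt_off as Hbl.
  destruct (opp_OI_spec _ B Hbl HBl) as [Hopp HBopp].
  assert (HAopp := add_OI_spec _ A _ Hbl HAl Hopp).
  unfold sub_OI in Hsub. rewrite Hsub in HAopp.
  apply (add_via_cancel_l O l (aux_pt inc O I) A B (opp_OI inc O I B) O); assumption.
Qed.

End Frame.

Section Transport.
Variables (f : point -> point) (F : line -> line).
Hypothesis f_inj : forall P Q, f P = f Q -> P = Q.
Hypothesis F_image : forall l, image_is inc f l (F l).

Lemma inc_image P l : inc (f P) (F l) <-> inc P l.
Proof.
  split.
  - intros HfP. apply F_image in HfP. destruct HfP as [Q [HQl HQP]].
    rewrite <- (f_inj Q P HQP). assumption.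
  - intros HPl. apply F_image. exists P. split; [assumption|reflexivity].
Qed.

Lemma is_lt_image P Q l : is_lt P Q l -> is_lt (f P) (f Q) (F l).
Proof.
  intros [HPQ [HPl HQl]]. repeat split; try apply inc_image; try assumption.
  intros HfPQ. apply HPQ, f_inj, HfPQ.
Qed.

Lemma par_image l m : par l m -> par (F l) (F m).
Proof.
  intros [->|Hd]; [apply par_refl|right].
  intros X [HXl HXm]. apply F_image in HXl. destruct HXl as [P [HPl <-]].
  apply (Hd P). split; [assumption|]. apply inc_image; assumption.
Qed.

Ltac image_conj :=
  repeat match goal with |- _ /\ _ => split end;
  first [apply is_lt_image | apply par_image | apply inc_image]; assumption.

Lemma par_proj_image l P B b S :
  par_proj l P B b S -> par_proj (F l) (f P) (f B) (f b) (f S).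
Proof.
  intros (j & n & Hj & HPn & Hnj & HSn & HSl).
  exists (F j), (F n).
  image_conj.
Qed.

Lemma add_via_image O l b A B S :
  add_via O l b A B S -> add_via (f O) (F l) (f b) (f A) (f B) (f S).
Proof.
  intros [P [(m1 & k & m2 & Hbm1 & Hm1 & Hk & HAm2 & Hm2 & HPm1 & HPm2) Hproj]].
  exists (f P). split; [|apply par_proj_image; assumption].
  exists (F m1), (F k), (F m2).
  image_conj.
Qed.

Lemma mul_via_image O I l b A B S :
  mul_via O I l b A B S -> mul_via (f O) (f I) (F l) (f b) (f A) (f B) (f S).
Proof.
  intros [P [(h & m2 & k & Hh & HAm2 & Hm2 & Hk & HPm2 & HPk) Hproj]].
  exists (f P). split; [|apply par_proj_image; assumption].
  exists (F h), (F m2), (F k).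
  image_conj.
Qed.

Section Frame.
Variables (O I : point) (l : line).
Hypothesis Hl : is_lt O I l.

Let b := aux_pt inc O I.
Let Hbl : ~ inc b l := aux_pt_off O I l Hl.
Let Hl' : is_lt (f O) (f I) (F l) := is_lt_image O I l Hl.
Let Hbl' : ~ inc (f b) (F l) := fun H => Hbl (proj1 (inc_image b l) H).

Lemma add_OI_image A B : inc A l -> inc B l ->
  f (add_OI inc O I A B) = add_OI inc (f O) (f I) (f A) (f B).
Proof.
  intros HAl HBl. symmetry.
  apply (add_OI_eq _ _ _ Hl' (f b)); try apply inc_image; try assumption.
  apply add_via_image, (add_OI_spec O I l Hl); assumption.
Qed.

Lemma mul_OI_image A B : inc A l -> inc B l ->
  f (mul_OI inc O I A B) = mul_OI inc (f O) (f I) (f A) (f B).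
Proof.
  intros HAl HBl. symmetry.
  apply (mul_OI_eq _ _ _ Hl' (f b)); try apply inc_image; try assumption.
  apply mul_via_image, (mul_OI_spec O I l Hl); assumption.
Qed.

Lemma opp_OI_image A : inc A l -> f (opp_OI inc O I A) = opp_OI inc (f O) (f I) (f A).
Proof.
  intros HAl. destruct (opp_OI_spec O I l Hl b A Hbl HAl) as [Hopp Hsum]. symmetry.
  apply (opp_OI_eq _ _ _ Hl' (f b)); try apply inc_image; try assumption.
  apply add_via_image; assumption.
Qed.

Lemma inv_OI_image A : inc A l -> A <> O ->
  f (inv_OI inc O I A) = inv_OI inc (f O) (f I) (f A).
Proof.
  intros HAl HAO. destruct (inv_OI_spec O I l Hl b A Hbl HAl HAO) as [Hinv Hprod]. symmetry.
  apply (inv_OI_eq _ _ _ Hl' (f b)); try apply inc_image; try assumption.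
  - intros HfA. apply HAO, f_inj, HfA.
  - apply mul_via_image; assumption.
Qed.

Lemma sub_OI_image A B : inc A l -> inc B l ->
  f (sub_OI inc O I A B) = sub_OI inc (f O) (f I) (f A) (f B).
Proof.
  intros HAl HBl. unfold sub_OI. rewrite <- opp_OI_image by assumption.
  apply add_OI_image; [assumption|]. apply (opp_OI_spec O I l Hl b); assumption.
Qed.

End Frame.

Lemma ratio_OI_image O I A B C :
  O <> I -> on_OI O I A -> on_OI O I B -> on_OI O I C -> B <> C ->
  f (ratio_OI inc O I A B C) = ratio_OI inc (f O) (f I) (f A) (f B) (f C).
Proof.
  intros HOI HAl HBl HCl HBC.
  destruct (line_through O I HOI) as [l [HOl HIl]].
  assert (Hl : is_lt O I l) by (repeat split; assumption).
  rewrite (on_OI_iff O I l Hl) in HAl, HBl, HCl.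
  assert (HAC_l := sub_OI_in O I l Hl A C HAl HCl).
  assert (HBC_l := sub_OI_in O I l Hl B C HBl HCl).
  assert (HBC_0 := sub_OI_neq0 O I l Hl B C HBl HCl HBC).
  assert (Hinv_l := proj1 (inv_OI_spec O I l Hl _ _ (aux_pt_off O I l Hl) HBC_l HBC_0)).
  unfold ratio_OI.
  rewrite (mul_OI_image O I l Hl), (inv_OI_image O I l Hl), !(sub_OI_image O I l Hl);
    try assumption.
  reflexivity.
Qed.

End Transport.

End DesarguesPlane.

Lemma translation_inj_image {point line : Type} (inc : point -> line -> Prop)
  (f : point -> point) :
  translation inc f ->
  (forall P Q, f P = f Q -> P = Q) /\ (forall l, exists m, image_is inc f l m).
Proof.
  intros [Hid | [[[Hinj [_ [Himg _]]] _] _]]; [split|split; assumption].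
  - intros P Q E. rewrite !Hid in E. assumption.
  - intros l. exists l. intros X. split.
    + intros HX. exists X. split; [assumption|apply Hid].
    + intros [P [HP <-]]. rewrite Hid. assumption.
Qed.

Theorem mainTheorem11 (point line : Type) (inc : point -> line -> Prop)
  (HA : desargues_affine_plane inc) (O I : point) (HOI : O <> I)
  (phi : point -> point) (Hphi : translation inc phi) :
  forall A B C : point,
    on_OI inc O I A -> on_OI inc O I B -> on_OI inc O I C -> B <> C ->
    phi (ratio_OI inc O I A B C) =
    ratio_OI inc (phi O) (phi I) (phi A) (phi B) (phi C).
Proof.
  intros A B C HA0 HB0 HC0 HBC.
  destruct (translation_inj_image inc phi Hphi) as [Hinj Himg].
  destruct (choice _ Himg) as [F HF].
  apply (ratio_OI_image point line inc HA phi F); assumption.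
Qed.
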